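(* Let $u(t)$ be a (twice continuously differentiable in $t$) vector of grid values on the reference grid satisfying the semidiscrete scheme $$J a\,\ddot{u} = \mathbb{D}_{jk}(\alpha_{ijik} b)\,u + \mathrm{SAT},$$ where $\mathrm{SAT}=\mathrm{SAT}(t)$ is an arbitrary vector of grid values (summation over $i,j,k$). Then $$\frac{dE}{dt} = \langle \dot u,\, b D_{\hat n} u\rangle_{\Gamma',h} + \dot u^T H\,\mathrm{SAT}.$$ In particular, with the Neumann penalty $$\mathrm{SAT} = -H^{-1}\sum_{f\in F} e_f\,\gamma\,H_f\, b\,\big(e_f^T D_{\hat n} u - 0\big)$$ (all coefficients evaluated on face $f$, and $D_{\hat n}$ formed with the normal of face $f$), one has $\frac{dE}{dt}=0$, and $E\ge 0$ for all $u,\dot u$.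
   Context: Summation convention: repeated subscript indices are summed from $1$ to $d$ unless ''no sum'' is stated. Every grid function (coefficient) is identified with the diagonal matrix of its grid values. One-dimensional SBP operators: on an equidistant grid of $N$ points with spacing $h$, let $e_\ell=(1,0,\dots,0)^T$, $e_r=(0,\dots,0,1)^T$, $H_\xi = h\,\mathrm{diag}(w_1,\dots,w_s,1,\dots,1,w_s,\dots,w_1)$ with all $w_i>0$, and $\theta_H:=w_1$. $D_\xi$ is an $N\times N$ matrix with $H_\xi D_\xi + D_\xi^T H_\xi = -e_\ell e_\ell^T + e_r e_r^T$; $\hat D_\xi$ is another $N\times N$ matrix and $\Delta D_\xi = D_\xi-\hat D_\xi$. For each grid function $c$, $D_{\xi\xi}(c)$ and $R_{\xi\xi}(c)$ are $N\times N$ matrices with $H_\xi D_{\xi\xi}(c) = -D_\xi^T H_\xi c D_\xi - R_{\xi\xi}(c) - e_\ell c_\ell e_\ell^T \hat D_\xi + e_r c_r e_r^T\hat D_\xi$ ($c_\ell,c_r$ the endpoint values of $c$), where $R_{\xi\xi}(c)$ depends linearly on $c$ and is symmetric positive semidefinite whenever $c\ge 0$ entrywise. Multi-dimensional operators: the reference domain $\Omega=[0,1]^d$ carries the tensor-product grid with $N$ points and spacing $h$ in each direction. $D_i$, $\hat D_i$, $H_i$ are the Kronecker products $I\otimes\cdots\otimes X\otimes\cdots\otimes I$ with $X=D_\xi,\hat D_\xi,H_\xi$ respectively in the $i$th factor; $\Delta D_i=D_i-\hat D_i$; $H=H_\xi\otimes\cdots\otimes H_\xi$ ($d$ factors). For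 a grid function $c$, $D_{ii}(c)$ (resp. $\widetilde R_{ii}(c)$) applies $D_{\xi\xi}$ (resp. $R_{\xi\xi}$), with $c$ restricted to the line, along every grid line in direction $i$, and $R_{ii}(c)=H_i^{-1}H\widetilde R_{ii}(c)$. Define $\mathbb D_{jk}(c)=D_{jj}(c)$ if $j=k$ and $\mathbb D_{jk}(c)=D_j c D_k$ if $j\ne k$. Faces: $\Gamma_i^-=\{\xi_i=0\}$, $\Gamma_i^+=\{\xi_i=1\}$, $F$ the set of all $2d$ faces. For $f\in F$, $e_f$ is the restriction matrix such that $e_f^Tu$ is the vector of values of $u$ at the grid points of $f$; for $f=\Gamma_i^\pm$, $H_f$ is the Kronecker product of $d-1$ copies of $H_\xi$ (direction $i$ omitted), and $\nu=(\nu_1,\dots,\nu_d)$ is the outward unit normal of $f$ in reference coordinates ($\nu_i=\pm1$, other components $0$). Discrete forms: $\langle u,v\rangle_{\Omega,h}=u^THv$, $\langle u,v\rangle_{\Gamma,h}=\sum_{f\in F}(e_f^Tu)^TH_f(e_f^Tv)$, where in the term for face $f$ every occurrence of $\nu$ or of face-dependent quantities refers to face $f$ (also at edge and corner points); $\|u\|^2_{\Omega,h}=\langle u,u\rangle_{\Omega,h}$, $\|u\|^2_{\Gamma,h}=\langle u,u\rangle_{\Gamma,h}$. Geometry and coefficients: a smooth bijection $\vec x(\vec\xi)$ from $\Omega$ onto the physical domain $\Omega'$; $\mathcal J_{ij}=\partial x_j/\partial\xi_i$, $J=\det\mathcal J>0$, $\mathcal K_{ij}=\partial\xi_j/\partial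 x_i$; $\gamma>0$ on $\partial\Omega$ is defined by $d\Gamma'=\gamma\,d\Gamma$ (surface element ratio); $a>0$, $b>0$ are coefficient functions; all are evaluated at grid points and regarded as diagonal matrices. $\alpha_{ijkl}=\mathcal K_{ij}J\mathcal K_{kl}$. Physical forms: $\langle u,v\rangle_{\Omega',h}=\langle u,Jv\rangle_{\Omega,h}$, $\langle u,v\rangle_{\Gamma',h}=\langle u,\gamma v\rangle_{\Gamma,h}$, with associated squared (semi)norms. $D_{x_i}=\mathcal K_{ij}D_j$. The discrete normal derivative (used at boundary points, face by face) is $D_{\hat n}=\nu_j\frac{\alpha_{ijik}}{\gamma}D_k-\sum_k\nu_k\frac{\alpha_{ikik}}{\gamma}\Delta D_k$. Let $\eta_k=\alpha_{ikik}b$ (sum over $i$, no sum over $k$). The discrete energy is $$E=\tfrac12\|\sqrt a\,\dot u\|^2_{\Omega',h}+\tfrac12\sum_i\|\sqrt b\,D_{x_i}u\|^2_{\Omega',h}+\tfrac12\sum_k u^TR_{kk}(\eta_k)u.$$ All coefficients are time-independent. *)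

From Stdlib Require Import Reals Lra Lia.
Open Scope R_scope.

Fixpoint rsum (n : nat) (f : nat -> R) : R :=
  match n with O => 0 | S n' => rsum n' f + f n' end.
Fixpoint rprod (n : nat) (f : nat -> R) : R :=
  match n with O => 1 | S n' => rprod n' f * f n' end.

Definition indic (b : bool) : R := if b then 1 else 0.

(** Vectors (grid functions) and matrices, indexed by nat; only the
    entries with indices below the relevant size are meaningful. *)
Definition vec := nat -> R.
Definition mat := nat -> nat -> R.

Definition mv (n : nat) (A : mat) (v : vec) : vec :=
  fun m => rsum n (fun m' => A m m' * v m').
Definition dot (n : nat) (u v : vec) : R := rsum n (fun m => u m * v m).

(** Diagonal entry k (0-based) of H_xi = h diag(w1..ws,1..1,ws..w1);
    the weight w_{i} is [w (i-1)]. *)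
Definition hweight (N s : nat) (h : R) (w : nat -> R) (k : nat) : R :=
  h * (if Nat.ltb k s then w k
       else if Nat.leb (N - s) k then w (N - 1 - k)%nat else 1).

(** * Tensor-product grid on [0,1]^d: N^d points, linear index m,
    coordinate i of point m is the i-th base-N digit of m. *)
Definition npts (N d : nat) : nat := Nat.pow N d.
Definition coord (N i m : nat) : nat := Nat.modulo (Nat.div m (Nat.pow N i)) N.
(** the grid point obtained from m by setting coordinate i to k *)
Definition setcoord (N i m k : nat) : nat :=
  (m - coord N i m * Nat.pow N i + k * Nat.pow N i)%nat.

(** [samel N d i m m'] = 1 iff m, m' lie on the same grid line in direction i *)
Definition samel (N d i m m' : nat) : R :=
  rprod d (fun l => if Nat.eqb l i then 1
                    else indic (Nat.eqb (coord N l m) (coord N l m'))).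

(** Kronecker product I ⊗ ... ⊗ X ⊗ ... ⊗ I (X in the i-th factor) *)
Definition kronI (N d i : nat) (X : mat) : mat :=
  fun m m' => X (coord N i m) (coord N i m') * samel N d i m m'.

(** H = H_xi ⊗ ... ⊗ H_xi (diagonal) *)
Definition Hdiag (N d : nat) (hw : nat -> R) (m : nat) : R :=
  rprod d (fun l => hw (coord N l m)).
Definition Hmat (N d : nat) (hw : nat -> R) : mat :=
  fun m m' => if Nat.eqb m m' then Hdiag N d hw m else 0.

(** restriction of a grid function c to the grid line in direction i through m *)
Definition lineof (N i : nat) (c : vec) (m : nat) : vec :=
  fun k => c (setcoord N i m k).

(** D_ii(c): D_xixi applied along every grid line in direction i *)
Definition Dii (N d : nat) (Dxx : vec -> mat) (i : nat) (c : vec) : mat :=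
  fun m m' => Dxx (lineof N i c m) (coord N i m) (coord N i m') * samel N d i m m'.
(** tilde R_ii(c) and R_ii(c) = H_i^{-1} H tilde R_ii(c) *)
Definition Rtii (N d : nat) (Rxx : vec -> mat) (i : nat) (c : vec) : mat :=
  fun m m' => Rxx (lineof N i c m) (coord N i m) (coord N i m') * samel N d i m m'.
Definition Rii (N d : nat) (hw : nat -> R) (Rxx : vec -> mat) (i : nat) (c : vec) : mat :=
  fun m m' => / hw (coord N i m) * Hdiag N d hw m * Rtii N d Rxx i c m m'.

Definition Dk (N d : nat) (D : mat) (k : nat) : mat := kronI N d k D.

Definition DDapp (N d : nat) (D : mat) (Dxx : vec -> mat) (j k : nat) (c u : vec) : vec :=
  if Nat.eqb j k then mv (npts N d) (Dii N d Dxx j c) u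
  else mv (npts N d) (Dk N d D j) (fun m => c m * mv (npts N d) (Dk N d D k) u m).

(** * Geometry: K i j = K_ij = d xi_j / d x_i (grid function), J (grid function) *)
Definition alpha (K : nat -> nat -> vec) (J : vec) (i j k l : nat) : vec :=
  fun m => K i j m * J m * K k l m.

Definition schemeRHS (N d : nat) (D : mat) (Dxx : vec -> mat)
  (K : nat -> nat -> vec) (J b : vec) (u : vec) : vec :=
  fun m => rsum d (fun i => rsum d (fun j => rsum d (fun k =>
     DDapp N d D Dxx j k (fun p => alpha K J i j i k p * b p) u m))).

Definition Dx (N d : nat) (D : mat) (K : nat -> nat -> vec) (i : nat) (u : vec) : vec :=
  fun m => rsum d (fun j => K i j m * mv (npts N d) (Dk N d D j) u m).

Definition eta (d : nat) (K : nat -> nat -> vec) (J b : vec) (k : nat) : vec :=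
  fun m => rsum d (fun i => alpha K J i k i k m) * b m.

Definition ipO (N d : nat) (hw : nat -> R) (u v : vec) : R :=
  dot (npts N d) u (mv (npts N d) (Hmat N d hw) v).
Definition ipOp (N d : nat) (hw : nat -> R) (J : vec) (u v : vec) : R :=
  ipO N d hw u (fun m => J m * v m).

Definition energy (N d : nat) (hw : nat -> R) (D : mat) (Rxx : vec -> mat)
  (K : nat -> nat -> vec) (J a b : vec) (u ud : vec) : R :=
  / 2 * ipOp N d hw J (fun m => sqrt (a m) * ud m) (fun m => sqrt (a m) * ud m)
  + / 2 * rsum d (fun i => ipOp N d hw J (fun m => sqrt (b m) * Dx N d D K i u m)
                                         (fun m => sqrt (b m) * Dx N d D K i u m))
  + / 2 * rsum d (fun k => dot (npts N d) u
                             (mv (npts N d) (Rii N d hw Rxx k (eta d K J b k)) u)).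

(** * Faces: face (i, false) = Gamma_i^- = {xi_i = 0}, (i, true) = Gamma_i^+ *)
Definition onface (N i : nat) (side : bool) (m : nat) : bool :=
  Nat.eqb (coord N i m) (if side then (N - 1)%nat else 0%nat).
Definition Hface (N d : nat) (hw : nat -> R) (i m : nat) : R :=
  rprod d (fun l => if Nat.eqb l i then 1 else hw (coord N l m)).
(** outward unit normal component nu_j of face (i, side) *)
Definition nu (i : nat) (side : bool) (j : nat) : R :=
  if Nat.eqb j i then (if side then 1 else -1) else 0.

(** <u, v>_{Gamma,h} where v may depend on the face *)
Definition ipG (N d : nat) (hw : nat -> R) (u : vec) (v : nat -> bool -> vec) : R :=
  rsum d (fun i =>
    rsum (npts N d) (fun m => indic (onface N i false m) * u m * Hface N d hw i m * v i false m)
  + rsum (npts N d) (fun m => indic (onface N i true m) * u m * Hface N d hw i m * v i true m)).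
Definition ipGp (N d : nat) (hw : nat -> R) (gamma : nat -> bool -> vec)
  (u : vec) (v : nat -> bool -> vec) : R :=
  ipG N d hw u (fun i s m => gamma i s m * v i s m).

Definition Dn (N d : nat) (D hatD : mat) (K : nat -> nat -> vec) (J : vec)
  (gamma : nat -> bool -> vec) (i : nat) (side : bool) (u : vec) : vec :=
  fun m =>
    rsum d (fun l => rsum d (fun j => rsum d (fun k =>
       nu i side j * (alpha K J l j l k m / gamma i side m)
       * mv (npts N d) (Dk N d D k) u m)))
  - rsum d (fun k =>
       nu i side k * (rsum d (fun l => alpha K J l k l k m) / gamma i side m)
       * mv (npts N d) (Dk N d (fun p q => D p q - hatD p q) k) u m).

Definition SATneu (N d : nat) (hw : nat -> R) (D hatD : mat) (K : nat -> nat -> vec)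
  (J b : vec) (gamma : nat -> bool -> vec) (u : vec) : vec :=
  fun m => - (/ Hdiag N d hw m) * rsum d (fun i =>
      indic (onface N i false m) * gamma i false m * Hface N d hw i m * b m
        * (Dn N d D hatD K J gamma i false u m - 0)
    + indic (onface N i true m) * gamma i true m * Hface N d hw i m * b m
        * (Dn N d D hatD K J gamma i true u m - 0)).

(** The heart of the proof is a discrete Green identity
    ([discrete_green]): for every grid function [v],
      [v^T H RHS(u) = - sum_i <D_{x_i} u, b D_{x_i} v>_{Omega'}
                      - sum_k v^T R_kk(eta_k) u + <v, b D_n u>_{Gamma'}].
    It is obtained term by term from summation by parts along grid lines:
    the one-dimensional SBP identities for [D_xi] and [D_xixi(c)] lift to the
    Kronecker operators [D_j] and [D_jj(c)] ([sbp_direction],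
    [sbp_second_derivative]); summing over [i, j, k] the volume terms assemble
    into the physical gradients, the remainders into [R_kk(eta_k)] (linearity of
    [R_xixi]), and the face terms into the discrete normal derivative.
    Taking [v = u_t] and differentiating the energy (product rule, symmetry of
    [R_kk(eta_k)]) gives the energy rate for an arbitrary SAT
    ([energy_rate]); the Neumann penalty cancels the boundary term exactly
    ([neumann_sat_cancels]); nonnegativity follows from [a, b, J > 0] and the
    positive semidefiniteness of [R_xixi], checked line by line. *)

From Pilot Require Import Defs.
From Stdlib Require Import Reals Lra Lia FunctionalExtensionality.
Open Scope R_scope.

Lemma rsum_ext n f g : (forall i, (i < n)%nat -> f i = g i) -> rsum n f = rsum n g.
Proof.
  induction n as [|n IH]; simpl; intros H; auto.
  rewrite IH by (intros; apply H; lia). rewrite H by lia. reflexivity.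
Qed.

Lemma rsum_plus n f g : rsum n (fun i => f i + g i) = rsum n f + rsum n g.
Proof. induction n as [|n IH]; simpl; [lra|]. rewrite IH. lra. Qed.

Lemma rsum_minus n f g : rsum n (fun i => f i - g i) = rsum n f - rsum n g.
Proof. induction n as [|n IH]; simpl; [lra|]. rewrite IH. lra. Qed.

Lemma rsum_opp n f : rsum n (fun i => - f i) = - rsum n f.
Proof. induction n as [|n IH]; simpl; [lra|]. rewrite IH. lra. Qed.

Lemma rsum_scal_l n c f : rsum n (fun i => c * f i) = c * rsum n f.
Proof. induction n as [|n IH]; simpl; [lra|]. rewrite IH. lra. Qed.

Lemma rsum_scal_r n c f : rsum n (fun i => f i * c) = rsum n f * c.
Proof. induction n as [|n IH]; simpl; [lra|]. rewrite IH. lra. Qed.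

Lemma rsum_zero n f : (forall i, (i < n)%nat -> f i = 0) -> rsum n f = 0.
Proof.
  induction n as [|n IH]; simpl; intros H; [reflexivity|].
  rewrite IH by (intros; apply H; lia). rewrite H by lia. ring.
Qed.

Lemma rsum_swap n m f :
  rsum n (fun i => rsum m (fun j => f i j)) = rsum m (fun j => rsum n (fun i => f i j)).
Proof.
  induction n as [|n IH]; simpl.
  - symmetry. apply rsum_zero. auto.
  - rewrite IH, <- rsum_plus. reflexivity.
Qed.

Lemma rsum_mult n m f g :
  rsum n f * rsum m g = rsum n (fun i => rsum m (fun j => f i * g j)).
Proof.
  rewrite <- rsum_scal_r. apply rsum_ext. intros. rewrite <- rsum_scal_l. reflexivity.
Qed.

Lemma rsum_nonneg n f : (forall i, (i < n)%nat -> 0 <= f i) -> 0 <= rsum n f.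
Proof.
  induction n as [|n IH]; simpl; intros H; [lra|].
  assert (0 <= rsum n f) by (apply IH; intros; apply H; lia).
  specialize (H n ltac:(lia)). lra.
Qed.

Lemma rsum_indic n x f : (x < n)%nat -> rsum n (fun i => indic (Nat.eqb i x) * f i) = f x.
Proof.
  induction n as [|n IH]; simpl; intros H; [lia|].
  destruct (Nat.eq_dec x n) as [->|Hne].
  - rewrite Nat.eqb_refl, rsum_zero; [unfold indic; ring|].
    intros i Hi. destruct (Nat.eqb_spec i n); [lia|]. unfold indic; ring.
  - rewrite IH by lia. destruct (Nat.eqb_spec n x); [lia|]. unfold indic; ring.
Qed.

Lemma rsum_indic' n x f : (x < n)%nat -> rsum n (fun i => indic (Nat.eqb x i) * f i) = f x.
Proof.
  intros Hx. rewrite <- (rsum_indic n x f Hx). apply rsum_ext. intros. rewrite Nat.eqb_sym. reflexivity.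
Qed.

Lemma rsum_select n x A : (x < n)%nat ->
  rsum n (fun k => if Nat.eqb k x then A k else 0) = A x.
Proof.
  intros Hx. rewrite <- (rsum_indic n x A Hx). apply rsum_ext. intros i _.
  destruct (Nat.eqb i x); unfold indic; ring.
Qed.

Lemma rsum_replace n x A B : (x < n)%nat ->
  rsum n (fun k => if Nat.eqb x k then B k else A k) = rsum n A - A x + B x.
Proof.
  intros Hx. transitivity (rsum n (fun k => A k + indic (Nat.eqb x k) * (B k - A k))).
  - apply rsum_ext. intros. destruct (Nat.eqb x i); unfold indic; ring.
  - rewrite rsum_plus, rsum_indic' by exact Hx. ring.
Qed.

Lemma rprod_ext n f g : (forall i, (i < n)%nat -> f i = g i) -> rprod n f = rprod n g.
Proof.
  induction n as [|n IH]; simpl; intros H; auto.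
  rewrite IH by (intros; apply H; lia). rewrite H by lia. reflexivity.
Qed.

Lemma rprod_one n : rprod n (fun _ => 1) = 1.
Proof. induction n as [|n IH]; simpl; [reflexivity|]. rewrite IH. ring. Qed.

Lemma rprod_pos n f : (forall i, (i < n)%nat -> 0 < f i) -> 0 < rprod n f.
Proof.
  induction n as [|n IH]; simpl; intros H; [lra|].
  apply Rmult_lt_0_compat; [apply IH; intros|]; apply H; lia.
Qed.

Lemma rprod_split n i f : (i < n)%nat ->
  rprod n f = f i * rprod n (fun l => if Nat.eqb l i then 1 else f l).
Proof.
  induction n as [|n IH]; simpl; intros H; [lia|].
  destruct (Nat.eq_dec i n) as [->|Hne].
  - rewrite Nat.eqb_refl.
    rewrite (rprod_ext n (fun l => if Nat.eqb l n then 1 else f l) f); [ring|].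
    intros l Hl. destruct (Nat.eqb_spec l n); [lia|reflexivity].
  - rewrite IH by lia. destruct (Nat.eqb_spec n i); [lia|]. ring.
Qed.

Lemma rprod_01 n f : (forall l, (l < n)%nat -> f l = 1 \/ f l = 0) ->
  (rprod n f = 1 /\ forall l, (l < n)%nat -> f l = 1)
  \/ (rprod n f = 0 /\ exists l, (l < n)%nat /\ f l = 0).
Proof.
  induction n as [|n IH]; simpl; intros H.
  - left. split; [reflexivity|]. intros; lia.
  - destruct (IH ltac:(intros; apply H; lia)) as [[H1 H2]|[H1 [l [Hl H3]]]].
    + destruct (H n ltac:(lia)) as [E|E].
      * left. split; [rewrite H1, E; ring|].
        intros l Hl. destruct (Nat.eq_dec l n) as [->|]; [exact E|apply H2; lia].
      * right. split; [rewrite E; ring|]. exists n. auto.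
    + right. split; [rewrite H1; ring|]. exists l. split; [lia|exact H3].
Qed.

Lemma derivable_pt_lim_rsum n (f : nat -> R -> R) (f' : nat -> R) t :
  (forall i, (i < n)%nat -> derivable_pt_lim (f i) t (f' i)) ->
  derivable_pt_lim (fun x => rsum n (fun i => f i x)) t (rsum n f').
Proof.
  induction n as [|n IH]; intros H; simpl.
  - exact (derivable_pt_lim_const 0 t).
  - apply (derivable_pt_lim_plus (fun x => rsum n (fun i => f i x)) (f n)).
    + apply IH. intros; apply H; lia.
    + apply H; lia.
Qed.

Lemma derivable_pt_lim_lincomb n (cf : nat -> R) (u du : R -> vec) t :
  (forall m, (m < n)%nat -> derivable_pt_lim (fun t => u t m) t (du t m)) ->
  derivable_pt_lim (fun x => rsum n (fun m => cf m * u x m)) t (rsum n (fun m => cf m * du t m)).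
Proof.
  intros H. apply (derivable_pt_lim_rsum n (fun m x => cf m * u x m)). intros m Hm.
  apply (derivable_pt_lim_scal (fun x => u x m)). auto.
Qed.

Lemma derivable_pt_lim_eq f t l l' : derivable_pt_lim f t l -> l = l' -> derivable_pt_lim f t l'.
Proof. intros H <-. exact H. Qed.

Section Digits.
Variable N : nat.
Hypothesis HN0 : N <> 0%nat.

Lemma coord0 m : coord N 0 m = Nat.modulo m N.
Proof. unfold coord. rewrite Nat.pow_0_r, Nat.div_1_r. reflexivity. Qed.

Lemma coordS l m : coord N (S l) m = coord N l (Nat.div m N).
Proof. unfold coord. rewrite Nat.pow_succ_r', Nat.Div0.div_div. reflexivity. Qed.

Lemma coord_lt l m : (coord N l m < N)%nat.
Proof. apply Nat.mod_upper_bound, HN0. Qed.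

Lemma coord_le j x : (coord N j x * Nat.pow N j <= x)%nat.
Proof.
  unfold coord. assert (HP : Nat.pow N j <> 0%nat) by (apply Nat.pow_nonzero, HN0).
  pose proof (Nat.Div0.mod_le (x / N ^ j) N).
  pose proof (Nat.Div0.mul_div_le x (N ^ j)).
  assert ((x / N ^ j) mod N * N ^ j <= x / N ^ j * N ^ j)%nat by (apply Nat.mul_le_mono_r; auto).
  lia.
Qed.

Lemma mod_lin q r : (r < N)%nat -> Nat.modulo (N * q + r) N = r.
Proof. intros. rewrite Nat.mul_comm, Nat.add_comm, Nat.Div0.mod_add. apply Nat.mod_small; auto. Qed.

Lemma div_lin q r : (r < N)%nat -> Nat.div (N * q + r) N = q.
Proof. intros. rewrite Nat.mul_comm, Nat.add_comm, Nat.div_add by exact HN0. rewrite Nat.div_small; auto. Qed.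

Lemma setcoord0 m r : setcoord N 0 m r = (N * (m / N) + r)%nat.
Proof. unfold setcoord. rewrite coord0. simpl. pose proof (Nat.div_mod_eq m N). lia. Qed.

Lemma setcoordS j m r : setcoord N (S j) m r = (N * setcoord N j (m / N) r + Nat.modulo m N)%nat.
Proof.
  unfold setcoord. rewrite coordS, Nat.pow_succ_r'.
  pose proof (coord_le j (m / N)). pose proof (Nat.div_mod_eq m N).
  set (c := coord N j (m / N)) in *. set (P := Nat.pow N j) in *.
  set (q := (m / N)%nat) in *. set (z := (m mod N)%nat) in *.
  assert (N * (c * P) <= N * q)%nat by (apply Nat.mul_le_mono_l; auto).
  replace (c * (N * P))%nat with (N * (c * P))%nat by ring.
  replace (r * (N * P))%nat with (N * (r * P))%nat by ring.
  rewrite H0 at 1. rewrite Nat.mul_add_distr_l, Nat.mul_sub_distr_l. lia.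
Qed.

Lemma coord_setcoord_same j m r : (r < N)%nat -> coord N j (setcoord N j m r) = r.
Proof.
  intros Hr. revert m. induction j as [|j IH]; intros m.
  - rewrite setcoord0, coord0. apply mod_lin; auto.
  - rewrite setcoordS, coordS, div_lin by (apply Nat.mod_upper_bound, HN0). apply IH.
Qed.

Lemma coord_setcoord_other j l m r : (r < N)%nat -> l <> j ->
  coord N l (setcoord N j m r) = coord N l m.
Proof.
  intros Hr. revert m l. induction j as [|j IH]; intros m l Hl.
  - destruct l as [|l]; [lia|]. rewrite setcoord0, !coordS, div_lin; auto.
  - rewrite setcoordS. destruct l as [|l].
    + rewrite !coord0. apply mod_lin, Nat.mod_upper_bound, HN0.
    + rewrite !coordS, div_lin by (apply Nat.mod_upper_bound, HN0). apply IH. lia.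
Qed.

Lemma setcoord_lt d j m r : (r < N)%nat -> (j < d)%nat -> (m < Nat.pow N d)%nat ->
  (setcoord N j m r < Nat.pow N d)%nat.
Proof.
  intros Hr. revert d m. induction j as [|j IH]; intros d m Hj Hm;
    (destruct d as [|d]; [lia|]); rewrite Nat.pow_succ_r' in *;
    assert ((m / N)%nat < N ^ d)%nat by (apply Nat.Div0.div_lt_upper_bound; auto).
  - rewrite setcoord0. nia.
  - rewrite setcoordS. specialize (IH d (m / N)%nat ltac:(lia) H).
    pose proof (Nat.mod_upper_bound m N HN0). nia.
Qed.

Lemma digits_unique d m m' : (m < Nat.pow N d)%nat -> (m' < Nat.pow N d)%nat ->
  (forall l, (l < d)%nat -> coord N l m = coord N l m') -> m = m'.
Proof.
  revert m m'. induction d as [|d IH]; intros m m' Hm Hm' H.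
  - simpl in *. lia.
  - rewrite Nat.pow_succ_r' in *.
    pose proof (Nat.div_mod_eq m N). pose proof (Nat.div_mod_eq m' N).
    assert (m mod N = m' mod N) by (rewrite <- !coord0; apply H; lia).
    assert (m / N = m' / N)%nat.
    { apply IH; try (apply Nat.Div0.div_lt_upper_bound; auto).
      intros l Hl. rewrite <- !coordS. apply H. lia. }
    lia.
Qed.

Lemma setcoord_base j m k : setcoord N j m k = (setcoord N j m 0 + k * Nat.pow N j)%nat.
Proof. unfold setcoord. pose proof (coord_le j m). lia. Qed.

Lemma setcoord_self d i m : (i < d)%nat -> (m < Nat.pow N d)%nat ->
  setcoord N i m (coord N i m) = m.
Proof.
  intros Hi Hm. apply (digits_unique d); auto.
  - apply setcoord_lt; auto using coord_lt.
  - intros l Hl. destruct (Nat.eq_dec l i) as [->|Hne].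
    + apply coord_setcoord_same, coord_lt.
    + apply coord_setcoord_other; auto using coord_lt.
Qed.

Lemma setcoord_eq d i m m' r : (i < d)%nat -> (m < Nat.pow N d)%nat -> (m' < Nat.pow N d)%nat ->
  (forall l, (l < d)%nat -> l <> i -> coord N l m = coord N l m') ->
  setcoord N i m r = setcoord N i m' r.
Proof.
  intros Hi Hm Hm' H. rewrite (setcoord_base i m), (setcoord_base i m').
  f_equal. apply (digits_unique d); try (apply setcoord_lt; auto; lia).
  intros l Hl. destruct (Nat.eq_dec l i) as [->|Hne].
  - rewrite !coord_setcoord_same by lia. reflexivity.
  - rewrite !coord_setcoord_other by lia. auto.
Qed.

End Digits.

Section SBPScheme.
Variables (N d : nat) (hw : nat -> R) (D hatD : mat) (Dxx Rxx : vec -> mat)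
  (K : nat -> nat -> vec) (J a b : vec) (gamma : nat -> bool -> vec).
Hypothesis HN2 : (2 <= N)%nat.

Local Notation M := (Nat.pow N d).

Lemma N_nonzero : N <> 0%nat.
Proof. lia. Qed.

Lemma coord_lt_N l m : (coord N l m < N)%nat.
Proof. apply coord_lt, N_nonzero. Qed.

Local Hint Resolve N_nonzero coord_lt_N : core.

Lemma samel_cases i m m' :
  (samel N d i m m' = 1 /\ forall l, (l < d)%nat -> l <> i -> coord N l m = coord N l m') \/
  (samel N d i m m' = 0 /\ exists l, (l < d)%nat /\ l <> i /\ coord N l m <> coord N l m').
Proof.
  unfold samel.
  destruct (rprod_01 d (fun l => if Nat.eqb l i then 1 else indic (Nat.eqb (coord N l m) (coord N l m'))))
    as [[H1 H2]|[H1 [l [Hl H3]]]].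
  - intros l _. destruct (Nat.eqb l i); [auto|]. unfold indic; destruct (Nat.eqb _ _); auto.
  - left. split; [exact H1|]. intros l Hl Hli. specialize (H2 l Hl). cbv beta in H2.
    destruct (Nat.eqb_spec l i); [lia|]. unfold indic in H2.
    destruct (Nat.eqb_spec (coord N l m) (coord N l m')); [assumption|lra].
  - right. split; [exact H1|]. exists l. cbv beta in H3.
    destruct (Nat.eqb_spec l i); [lra|]. unfold indic in H3.
    destruct (Nat.eqb_spec (coord N l m) (coord N l m')); [lra|auto].
Qed.

Lemma samel_one i m m' : (forall l, (l < d)%nat -> l <> i -> coord N l m = coord N l m') ->
  samel N d i m m' = 1.
Proof.
  intros H. unfold samel. transitivity (rprod d (fun _ => 1)); [|apply rprod_one].
  apply rprod_ext. intros l Hl.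
  destruct (Nat.eqb_spec l i); [reflexivity|]. rewrite H, Nat.eqb_refl by assumption. reflexivity.
Qed.

Lemma samel_sym i m m' : samel N d i m m' = samel N d i m' m.
Proof.
  unfold samel. apply rprod_ext. intros l _.
  destruct (Nat.eqb l i); [reflexivity|]. rewrite Nat.eqb_sym. reflexivity.
Qed.

Lemma samel_coords i m1 m2 m' :
  (forall l, (l < d)%nat -> l <> i -> coord N l m1 = coord N l m2) ->
  samel N d i m1 m' = samel N d i m2 m'.
Proof.
  intros H. unfold samel. apply rprod_ext. intros l Hl.
  destruct (Nat.eqb_spec l i); [reflexivity|]. rewrite H by assumption. reflexivity.
Qed.

Lemma samel_setcoord i m m' r : (r < N)%nat -> samel N d i (setcoord N i m r) m' = samel N d i m m'.
Proof. intros Hr. apply samel_coords. intros. apply coord_setcoord_other; auto. Qed.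

Lemma Hface_coords i m1 m2 :
  (forall l, (l < d)%nat -> l <> i -> coord N l m1 = coord N l m2) ->
  Hface N d hw i m1 = Hface N d hw i m2.
Proof.
  intros H. unfold Hface. apply rprod_ext. intros l Hl.
  destruct (Nat.eqb_spec l i); [reflexivity|]. rewrite H by assumption. reflexivity.
Qed.

Lemma Hface_setcoord i m r : (r < N)%nat -> Hface N d hw i (setcoord N i m r) = Hface N d hw i m.
Proof. intros Hr. apply Hface_coords. intros. apply coord_setcoord_other; auto. Qed.

Lemma Hdiag_split i m : (i < d)%nat -> Hdiag N d hw m = hw (coord N i m) * Hface N d hw i m.
Proof. intros Hi. exact (rprod_split d i (fun l => hw (coord N l m)) Hi). Qed.

Lemma lineof_eq k (c : vec) m m' : (k < d)%nat -> (m < M)%nat -> (m' < M)%nat ->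
  samel N d k m m' = 1 -> lineof N k c m = lineof N k c m'.
Proof.
  intros Hk Hm Hm' Hs. destruct (samel_cases k m m') as [[_ H]|[H _]]; [|lra].
  apply functional_extensionality. intros r. unfold lineof.
  rewrite (setcoord_eq N N_nonzero d k m m'); auto.
Qed.

Lemma samel_as_sum i m m'' : (i < d)%nat -> (m < M)%nat -> (m'' < M)%nat ->
  samel N d i m'' m = rsum N (fun r => indic (Nat.eqb (setcoord N i m r) m'')).
Proof.
  intros Hi Hm Hm''.
  destruct (samel_cases i m'' m) as [[H1 H2]|[H1 [l [Hl [Hli H3]]]]]; rewrite H1.
  - rewrite <- (rsum_indic N (coord N i m'') (fun _ => 1)) by auto.
    apply rsum_ext. intros r Hr. rewrite Rmult_1_r. f_equal.
    destruct (Nat.eqb_spec (setcoord N i m r) m''); destruct (Nat.eqb_spec r (coord N i m''));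
      auto; exfalso.
    + subst. rewrite coord_setcoord_same in n; auto.
    + subst. apply n. rewrite <- (setcoord_self N N_nonzero d i m'') at 2 by assumption.
      apply (setcoord_eq N N_nonzero d); auto. intros. symmetry; auto.
  - symmetry. apply rsum_zero. intros r Hr.
    destruct (Nat.eqb_spec (setcoord N i m r) m''); [|reflexivity].
    exfalso. apply H3. subst. rewrite coord_setcoord_other; auto.
Qed.

Lemma line_sum i m F : (i < d)%nat -> (m < M)%nat ->
  rsum M (fun m'' => samel N d i m'' m * F m'') = rsum N (fun r => F (setcoord N i m r)).
Proof.
  intros Hi Hm.
  transitivity (rsum M (fun m'' => rsum N (fun r => indic (Nat.eqb (setcoord N i m r) m'') * F m''))).
  - apply rsum_ext. intros m'' Hm''. rewrite samel_as_sum, <- rsum_scal_r by assumption. reflexivity.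
  - rewrite rsum_swap. apply rsum_ext. intros r Hr. apply rsum_indic'.
    apply setcoord_lt; auto.
Qed.

(** A sum over the grid regrouped line by line (lines in direction [i] are
    indexed by their points with [i]-th coordinate 0). *)
Lemma sum_by_lines i Phi : (i < d)%nat ->
  rsum M Phi =
  rsum M (fun m => indic (Nat.eqb (coord N i m) 0) * rsum N (fun r => Phi (setcoord N i m r))).
Proof.
  intros Hi. symmetry.
  transitivity (rsum M (fun m => rsum M (fun m'' =>
    indic (Nat.eqb (coord N i m) 0) * samel N d i m'' m * Phi m''))).
  - apply rsum_ext. intros m Hm. rewrite <- (line_sum i m Phi), <- rsum_scal_l by assumption.
    apply rsum_ext. intros. ring.
  - rewrite rsum_swap. apply rsum_ext. intros m'' Hm''.
    transitivity (rsum M (fun m => samel N d i m m'' * indic (Nat.eqb (coord N i m) 0)) * Phi m'').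
    + rewrite <- rsum_scal_r. apply rsum_ext. intros. rewrite samel_sym. ring.
    + rewrite line_sum by assumption.
      rewrite (rsum_ext N _ (fun r => indic (Nat.eqb r 0) * 1)).
      * rewrite (rsum_indic N 0 (fun _ => 1)) by lia. ring.
      * intros r Hr. rewrite coord_setcoord_same by auto. ring.
Qed.

(** ** Summation by parts on the tensor grid *)

Hypothesis Hhw : forall k, (k < N)%nat -> 0 < hw k.

Lemma Hdiag_pos m : 0 < Hdiag N d hw m.
Proof. apply rprod_pos. intros. apply Hhw. auto. Qed.

Lemma Hface_pos i m : 0 < Hface N d hw i m.
Proof. apply rprod_pos. intros l _. destruct (Nat.eqb l i); [lra|apply Hhw; auto]. Qed.

Lemma mv_Hmat v m : (m < M)%nat -> mv M (Hmat N d hw) v m = Hdiag N d hw m * v m.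
Proof.
  intros Hm. unfold mv, Hmat. rewrite <- (rsum_indic' M m (fun m' => Hdiag N d hw m * v m')) by exact Hm.
  apply rsum_ext. intros i _. destruct (Nat.eqb_spec m i); subst; unfold indic; ring.
Qed.

(** Boundary form of direction [j]: [x^T (e_r e_r^T - e_l e_l^T)_j H_f y], i.e.
    the face terms on [Gamma_j^+] minus those on [Gamma_j^-]. *)
Definition bform j (x y : vec) : R :=
  rsum M (fun m => (- indic (onface N j false m) + indic (onface N j true m))
                   * Hface N d hw j m * x m * y m).

Lemma bform_rsum j n v (f : nat -> vec) :
  rsum n (fun i => bform j v (f i)) = bform j v (fun m => rsum n (fun i => f i m)).
Proof. unfold bform. rewrite rsum_swap. apply rsum_ext. intros. rewrite rsum_scal_l. reflexivity. Qed.

Hypothesis HSBP : forall p q, (p < N)%nat -> (q < N)%nat ->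
  hw p * D p q + D q p * hw q
  = - indic (Nat.eqb p 0 && Nat.eqb q 0) + indic (Nat.eqb p (N - 1) && Nat.eqb q (N - 1)).

Lemma sbp_entrywise j m m' : (j < d)%nat -> (m < M)%nat -> (m' < M)%nat ->
  Hdiag N d hw m * Dk N d D j m m' + Hdiag N d hw m' * Dk N d D j m' m
  = indic (Nat.eqb m m') * Hface N d hw j m
    * (- indic (onface N j false m) + indic (onface N j true m)).
Proof.
  intros Hj Hm Hm'. unfold Dk, kronI. rewrite (samel_sym j m' m).
  destruct (samel_cases j m m') as [[H1 H2]|[H1 [l [_ [_ Hl]]]]]; rewrite H1.
  - rewrite (Hdiag_split j m), (Hdiag_split j m'), (Hface_coords j m' m)
      by (auto; intros; symmetry; auto).
    set (p := coord N j m). set (q := coord N j m').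
    transitivity (Hface N d hw j m * (hw p * D p q + D q p * hw q)); [ring|].
    rewrite HSBP by (unfold p, q; auto). unfold onface. fold p.
    destruct (Nat.eqb_spec m m') as [<-|Hne].
    + fold p in q. subst q. destruct (Nat.eqb p 0); destruct (Nat.eqb p (N - 1)); simpl; unfold indic; ring.
    + assert (p <> q).
      { intro E. apply Hne. apply (digits_unique N N_nonzero d); auto.
        intros l Hl. destruct (Nat.eq_dec l j) as [->|]; auto. }
      destruct (Nat.eqb_spec p 0); destruct (Nat.eqb_spec q 0); try lia;
      destruct (Nat.eqb_spec p (N - 1)); destruct (Nat.eqb_spec q (N - 1)); try lia;
      simpl; unfold indic; ring.
  - destruct (Nat.eqb_spec m m'); [subst; congruence|]. unfold indic. ring.
Qed.

Lemma sbp_direction j x w : (j < d)%nat ->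
  rsum M (fun m => x m * Hdiag N d hw m * mv M (Dk N d D j) w m)
  = - rsum M (fun m => Hdiag N d hw m * mv M (Dk N d D j) x m * w m) + bform j x w.
Proof.
  intros Hj.
  set (T := fun m m' => x m * w m' * (Hdiag N d hw m' * Dk N d D j m' m)).
  assert (E1 : rsum M (fun m => x m * Hdiag N d hw m * mv M (Dk N d D j) w m)
             = rsum M (fun m => rsum M (fun m' => x m * w m' * (Hdiag N d hw m * Dk N d D j m m')))).
  { apply rsum_ext. intros. unfold mv. rewrite <- rsum_scal_l. apply rsum_ext. intros. ring. }
  assert (E2 : rsum M (fun m => Hdiag N d hw m * mv M (Dk N d D j) x m * w m)
             = rsum M (fun m => rsum M (T m))).
  { rewrite rsum_swap. apply rsum_ext. intros. unfold mv, T.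
    rewrite <- rsum_scal_l, <- rsum_scal_r. apply rsum_ext. intros. ring. }
  rewrite E1, E2. apply Rplus_eq_reg_r with (rsum M (fun m => rsum M (T m))).
  rewrite <- rsum_plus. ring_simplify. unfold bform, T. apply rsum_ext. intros m Hm.
  rewrite <- rsum_plus.
  transitivity (rsum M (fun m' => indic (Nat.eqb m m') * (x m * w m' * Hface N d hw j m
                   * (- indic (onface N j false m) + indic (onface N j true m))))).
  - apply rsum_ext. intros m' Hm'. rewrite <- Rmult_plus_distr_l, sbp_entrywise by assumption. ring.
  - rewrite rsum_indic' by assumption. ring.
Qed.

Hypothesis HDxx : forall (c : vec) p q, (p < N)%nat -> (q < N)%nat ->
  hw p * Dxx c p q
  = - rsum N (fun r => D r p * hw r * c r * D r q)
    - Rxx c p q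
    - indic (Nat.eqb p 0) * c 0%nat * hatD 0%nat q
    + indic (Nat.eqb p (N - 1)) * c (N - 1)%nat * hatD (N - 1)%nat q.

Lemma Rii_entry j c m m' : (j < d)%nat ->
  Rii N d hw Rxx j c m m'
  = Hface N d hw j m * Rxx (lineof N j c m) (coord N j m) (coord N j m') * samel N d j m m'.
Proof.
  intros Hj. unfold Rii, Rtii. rewrite (Hdiag_split j m) by exact Hj.
  assert (hw (coord N j m) <> 0) by (apply Rgt_not_eq, Hhw; auto). field. assumption.
Qed.

Lemma weighted_Dk_form j c v u : (j < d)%nat ->
  rsum M (fun m'' => Hdiag N d hw m'' * c m'' * mv M (Dk N d D j) v m'' * mv M (Dk N d D j) u m'')
  = rsum M (fun m => rsum M (fun m' => v m * u m' * (Hface N d hw j m * samel N d j m m' *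
      rsum N (fun r => D r (coord N j m) * hw r * lineof N j c m r * D r (coord N j m'))))).
Proof.
  intros Hj.
  transitivity (rsum M (fun m'' => rsum M (fun m => rsum M (fun m' => v m * u m' *
     (samel N d j m'' m * (Hdiag N d hw m'' * c m'' * D (coord N j m'') (coord N j m)
        * D (coord N j m'') (coord N j m') * samel N d j m'' m')))))).
  { apply rsum_ext. intros m'' _. unfold mv, Dk, kronI.
    rewrite Rmult_assoc, rsum_mult, <- rsum_scal_l.
    apply rsum_ext. intros. rewrite <- rsum_scal_l. apply rsum_ext. intros. ring. }
  rewrite rsum_swap. apply rsum_ext. intros m Hm. rewrite rsum_swap. apply rsum_ext. intros m' _.
  rewrite rsum_scal_l. f_equal.
  rewrite (line_sum j m (fun m'' => Hdiag N d hw m'' * c m'' * D (coord N j m'') (coord N j m)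
        * D (coord N j m'') (coord N j m') * samel N d j m'' m')) by assumption.
  rewrite <- rsum_scal_l. apply rsum_ext. intros r Hr.
  rewrite (Hdiag_split j), coord_setcoord_same, Hface_setcoord, samel_setcoord by auto.
  unfold lineof. ring.
Qed.

Lemma lineof_at_face j (c : vec) m r : (j < d)%nat -> (m < M)%nat -> coord N j m = r ->
  lineof N j c m r = c m.
Proof. intros Hj Hm <-. unfold lineof. rewrite (setcoord_self N N_nonzero d); auto. Qed.

Lemma second_derivative_entry j c m m' : (j < d)%nat -> (m < M)%nat ->
  Hdiag N d hw m * Dii N d Dxx j c m m'
  = - (Hface N d hw j m * samel N d j m m'
       * rsum N (fun r => D r (coord N j m) * hw r * lineof N j c m r * D r (coord N j m')))
    - Rii N d hw Rxx j c m m'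
    + (- indic (onface N j false m) + indic (onface N j true m))
      * Hface N d hw j m * c m * Dk N d hatD j m m'.
Proof.
  intros Hj Hm. unfold Dii, Dk, kronI. rewrite (Hdiag_split j m), Rii_entry by exact Hj.
  transitivity (Hface N d hw j m * samel N d j m m'
    * (hw (coord N j m) * Dxx (lineof N j c m) (coord N j m) (coord N j m'))); [ring|].
  rewrite HDxx by auto. unfold onface.
  destruct (Nat.eqb_spec (coord N j m) 0) as [E0|E0];
    [rewrite (lineof_at_face j c m 0) by assumption|];
    (destruct (Nat.eqb_spec (coord N j m) (N - 1)) as [E1|E1];
    [rewrite (lineof_at_face j c m (N - 1)) by assumption|]); try lia;
    rewrite ?E0, ?E1; unfold indic; ring.
Qed.

Lemma sbp_second_derivative j c v u : (j < d)%nat ->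
  rsum M (fun m => v m * Hdiag N d hw m * mv M (Dii N d Dxx j c) u m)
  = - rsum M (fun m => Hdiag N d hw m * c m * mv M (Dk N d D j) v m * mv M (Dk N d D j) u m)
    - rsum M (fun m => v m * mv M (Rii N d hw Rxx j c) u m)
    + bform j v (fun m => c m * mv M (Dk N d hatD j) u m).
Proof.
  intros Hj. rewrite weighted_Dk_form by exact Hj. unfold bform, mv.
  rewrite <- rsum_opp, <- rsum_minus, <- rsum_plus. apply rsum_ext. intros m Hm.
  rewrite <- !rsum_scal_l, <- rsum_opp, <- rsum_minus, <- rsum_plus.
  apply rsum_ext. intros m' _.
  transitivity (v m * u m' * (Hdiag N d hw m * Dii N d Dxx j c m m')); [ring|].
  rewrite second_derivative_entry by assumption. ring.
Qed.

Lemma sbp_DD j k c v u : (j < d)%nat -> (k < d)%nat ->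
  rsum M (fun m => v m * Hdiag N d hw m * DDapp N d D Dxx j k c u m)
  = - rsum M (fun m => Hdiag N d hw m * c m * mv M (Dk N d D j) v m * mv M (Dk N d D k) u m)
    - indic (Nat.eqb j k) * rsum M (fun m => v m * mv M (Rii N d hw Rxx j c) u m)
    + bform j v (fun m => c m * (if Nat.eqb j k then mv M (Dk N d hatD j) u m
                                 else mv M (Dk N d D k) u m)).
Proof.
  intros Hj Hk. unfold DDapp, npts. destruct (Nat.eqb_spec j k) as [<-|Hne].
  - rewrite sbp_second_derivative by exact Hj. unfold indic. ring.
  - rewrite sbp_direction by exact Hj. unfold indic.
    rewrite (rsum_ext M (fun m => Hdiag N d hw m * mv M (Dk N d D j) v m * (c m * mv M (Dk N d D k) u m))
      (fun m => Hdiag N d hw m * c m * mv M (Dk N d D j) v m * mv M (Dk N d D k) u m))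
      by (intros; ring).
    ring.
Qed.

Lemma rsum_triple_swap (x : vec) (f : nat -> nat -> nat -> nat -> R) :
  rsum M (fun m => x m * rsum d (fun i => rsum d (fun j => rsum d (fun k => f i j k m))))
  = rsum d (fun i => rsum d (fun j => rsum d (fun k => rsum M (fun m => x m * f i j k m)))).
Proof.
  transitivity (rsum M (fun m => rsum d (fun i => rsum d (fun j => rsum d (fun k => x m * f i j k m))))).
  { apply rsum_ext. intros. rewrite <- rsum_scal_l. apply rsum_ext. intros.
    rewrite <- rsum_scal_l. apply rsum_ext. intros. rewrite <- rsum_scal_l. reflexivity. }
  rewrite rsum_swap. apply rsum_ext. intros. rewrite rsum_swap. apply rsum_ext. intros.
  apply rsum_swap.
Qed.

Hypothesis HRlin : forall (c1 c2 : vec) (x y : R) p q, (p < N)%nat -> (q < N)%nat ->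
  Rxx (fun r => x * c1 r + y * c2 r) p q = x * Rxx c1 p q + y * Rxx c2 p q.

Lemma Rxx_rsum n (g : nat -> vec) p q : (p < N)%nat -> (q < N)%nat ->
  Rxx (fun r => rsum n (fun i => g i r)) p q = rsum n (fun i => Rxx (g i) p q).
Proof.
  intros Hp Hq. induction n as [|n IH]; simpl.
  - pose proof (HRlin (fun _ => 0) (fun _ => 0) 0 0 p q Hp Hq) as H0. cbv beta in H0.
    replace (fun _ : nat => 0 * 0 + 0 * 0) with (fun _ : nat => 0) in H0
      by (apply functional_extensionality; intros; ring).
    rewrite H0. ring.
  - rewrite <- IH. pose proof (HRlin (fun r => rsum n (fun i => g i r)) (g n) 1 1 p q Hp Hq) as H1.
    cbv beta in H1. rewrite !Rmult_1_l in H1. rewrite <- H1.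
    f_equal. apply functional_extensionality. intros. ring.
Qed.

(** ** The discrete Green identity for the scheme *)

Definition coef i j k : vec := fun p => alpha K J i j i k p * b p.

Lemma volume_terms u v :
  rsum d (fun i => rsum d (fun j => rsum d (fun k => rsum M (fun m =>
     Hdiag N d hw m * coef i j k m * mv M (Dk N d D j) v m * mv M (Dk N d D k) u m))))
  = rsum d (fun i => rsum M (fun m =>
      Hdiag N d hw m * J m * b m * (Defs.Dx N d D K i u m * Defs.Dx N d D K i v m))).
Proof.
  apply rsum_ext. intros i _.
  rewrite (rsum_ext d _ (fun j => rsum M (fun m => rsum d (fun k =>
     Hdiag N d hw m * coef i j k m * mv M (Dk N d D j) v m * mv M (Dk N d D k) u m))))
    by (intros; apply rsum_swap).
  rewrite rsum_swap. apply rsum_ext. intros m _.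
  unfold Defs.Dx, npts. rewrite (Rmult_comm (rsum d _)), rsum_mult, <- rsum_scal_l.
  apply rsum_ext. intros j _. rewrite <- rsum_scal_l. apply rsum_ext. intros k _.
  unfold coef, alpha. ring.
Qed.

Lemma remainder_terms u v :
  rsum d (fun i => rsum d (fun j => rsum d (fun k => indic (Nat.eqb j k) *
     rsum M (fun m => v m * mv M (Rii N d hw Rxx j (coef i j k)) u m))))
  = rsum d (fun k => rsum M (fun m => v m * mv M (Rii N d hw Rxx k (eta d K J b k)) u m)).
Proof.
  rewrite (rsum_ext d _ (fun i => rsum d (fun j =>
             rsum M (fun m => v m * mv M (Rii N d hw Rxx j (coef i j j)) u m)))).
  2:{ intros i _. apply rsum_ext. intros j Hj.
      exact (rsum_indic' d j (fun k => rsum M (fun m => v m * mv M (Rii N d hw Rxx j (coef i j k)) u m)) Hj). }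
  rewrite rsum_swap. apply rsum_ext. intros j Hj. rewrite rsum_swap. apply rsum_ext. intros m Hm.
  rewrite rsum_scal_l. f_equal. unfold mv. rewrite rsum_swap. apply rsum_ext. intros m' _.
  rewrite rsum_scal_r. apply Rmult_eq_compat_r.
  rewrite (rsum_ext d _ (fun i => Hface N d hw j m * samel N d j m m'
             * Rxx (lineof N j (coef i j j) m) (coord N j m) (coord N j m')))
    by (intros; rewrite Rii_entry by exact Hj; ring).
  rewrite Rii_entry, rsum_scal_l, <- Rxx_rsum by auto.
  replace (fun r => rsum d (fun i => lineof N j (coef i j j) m r)) with (lineof N j (eta d K J b j) m);
    [ring|].
  apply functional_extensionality. intros r. unfold lineof, coef, eta. rewrite rsum_scal_r. reflexivity.
Qed.

(** Conormal derivative in direction [j] (without the sign of the normal and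
    the factor [1/gamma]):
    [sum_i alpha_ijik D_k u - (sum_i alpha_ijij) Delta D_j u]. *)
Definition conormal j u : vec := fun m =>
  rsum d (fun l => rsum d (fun k => alpha K J l j l k m * mv M (Dk N d D k) u m))
  - rsum d (fun l => alpha K J l j l j m)
    * (mv M (Dk N d D j) u m - mv M (Dk N d hatD j) u m).

Lemma mv_Dk_minus (X Y : mat) j u m :
  mv M (Dk N d (fun p q => X p q - Y p q) j) u m = mv M (Dk N d X j) u m - mv M (Dk N d Y j) u m.
Proof. unfold mv, Dk, kronI. rewrite <- rsum_minus. apply rsum_ext. intros. ring. Qed.

(** Only the normal component [nu_j] of face [(j, side)] survives in [D_n]. *)
Lemma Dn_conormal j side u m : (j < d)%nat -> gamma j side m <> 0 ->
  gamma j side m * Dn N d D hatD K J gamma j side u m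
  = (if side then 1 else -1) * conormal j u m.
Proof.
  intros Hj Hg0. unfold Dn, conormal, npts. set (sg := if side then 1 else -1).
  assert (nuE : forall j', nu j side j' = if Nat.eqb j' j then sg else 0).
  { intros j'. unfold nu, sg. destruct (Nat.eqb j' j); reflexivity. }
  set (g := gamma j side m) in *.
  rewrite (rsum_ext d _ (fun l => rsum d (fun j' => if Nat.eqb j' j
      then sg * / g * rsum d (fun k => alpha K J l j l k m * mv M (Dk N d D k) u m) else 0))).
  2:{ intros l _. apply rsum_ext. intros j' _. rewrite nuE. destruct (Nat.eqb_spec j' j) as [->|].
      - rewrite <- rsum_scal_l. apply rsum_ext. intros. unfold Rdiv. ring.
      - apply rsum_zero. intros. ring. }
  rewrite (rsum_ext d (fun k => nu j side k * _ * _) (fun k => if Nat.eqb k j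
      then sg * / g * rsum d (fun l => alpha K J l j l j m)
           * (mv M (Dk N d D j) u m - mv M (Dk N d hatD j) u m) else 0)).
  2:{ intros k _. rewrite nuE. destruct (Nat.eqb_spec k j) as [->|]; [|ring].
      rewrite mv_Dk_minus. unfold Rdiv. ring. }
  rewrite rsum_select by exact Hj.
  rewrite (rsum_ext d _ (fun l => sg * / g * rsum d (fun k => alpha K J l j l k m * mv M (Dk N d D k) u m)))
    by (intros; apply rsum_select; exact Hj).
  rewrite rsum_scal_l. field. exact Hg0.
Qed.

Definition face_flux j u : vec := fun m =>
  rsum d (fun i => rsum d (fun k => coef i j k m *
    (if Nat.eqb j k then mv M (Dk N d hatD j) u m else mv M (Dk N d D k) u m))).

Lemma face_flux_conormal j u m : (j < d)%nat -> face_flux j u m = b m * conormal j u m.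
Proof.
  intros Hj. unfold face_flux, conormal.
  set (Dj := mv M (Dk N d D j) u m). set (hDj := mv M (Dk N d hatD j) u m).
  rewrite (rsum_ext d _ (fun i => rsum d (fun k => coef i j k m * mv M (Dk N d D k) u m)
                                  - coef i j j m * Dj + coef i j j m * hDj)).
  2:{ intros i _.
      transitivity (rsum d (fun k => if Nat.eqb j k then coef i j k m * hDj
                                     else coef i j k m * mv M (Dk N d D k) u m)).
      - apply rsum_ext. intros k _. destruct (Nat.eqb j k); reflexivity.
      - apply rsum_replace. exact Hj. }
  assert (Hvol : rsum d (fun i => rsum d (fun k => coef i j k m * mv M (Dk N d D k) u m))
    = b m * rsum d (fun l => rsum d (fun k => alpha K J l j l k m * mv M (Dk N d D k) u m))).
  { rewrite <- rsum_scal_l. apply rsum_ext. intros. rewrite <- rsum_scal_l.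
    apply rsum_ext. intros. unfold coef. ring. }
  assert (Hdiag : forall X, rsum d (fun i => coef i j j m * X)
    = b m * rsum d (fun l => alpha K J l j l j m) * X).
  { intros X. rewrite <- rsum_scal_l, <- rsum_scal_r. apply rsum_ext. intros. unfold coef. ring. }
  rewrite rsum_plus, rsum_minus, Hvol, !Hdiag. ring.
Qed.

Lemma normal_flux j side u m : (j < d)%nat -> gamma j side m <> 0 ->
  gamma j side m * (b m * Dn N d D hatD K J gamma j side u m)
  = (if side then 1 else -1) * face_flux j u m.
Proof.
  intros Hj Hg0. rewrite face_flux_conormal by exact Hj.
  transitivity (b m * (gamma j side m * Dn N d D hatD K J gamma j side u m)); [ring|].
  rewrite Dn_conormal by assumption. ring.
Qed.

Hypothesis Hg : forall i side m, (i < d)%nat -> (m < M)%nat ->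
  onface N i side m = true -> 0 < gamma i side m.

(** Off the face both sides vanish; on it, use [normal_flux] ([gamma > 0]). *)
Lemma face_term j side u m : (j < d)%nat -> (m < M)%nat ->
  indic (onface N j side m) * (gamma j side m * (b m * Dn N d D hatD K J gamma j side u m))
  = indic (onface N j side m) * ((if side then 1 else -1) * face_flux j u m).
Proof.
  intros Hj Hm. destruct (onface N j side m) eqn:Hface.
  - rewrite normal_flux by (auto; apply Rgt_not_eq, Hg; auto). reflexivity.
  - unfold indic. ring.
Qed.

Lemma boundary_terms u v :
  rsum d (fun i => rsum d (fun j => rsum d (fun k => bform j v (fun m => coef i j k m *
       (if Nat.eqb j k then mv M (Dk N d hatD j) u m else mv M (Dk N d D k) u m)))))
  = ipGp N d hw gamma v (fun i side m => b m * Dn N d D hatD K J gamma i side u m).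
Proof.
  rewrite rsum_swap. unfold ipGp, ipG. apply rsum_ext. intros j Hj.
  rewrite (rsum_ext d _ (fun i => bform j v (fun m => rsum d (fun k => coef i j k m *
       (if Nat.eqb j k then mv M (Dk N d hatD j) u m else mv M (Dk N d D k) u m)))))
    by (intros; apply bform_rsum).
  rewrite bform_rsum. unfold bform, npts. rewrite <- rsum_plus. apply rsum_ext. intros m Hm.
  transitivity (v m * Hface N d hw j m * (indic (onface N j false m)
                  * (gamma j false m * (b m * Dn N d D hatD K J gamma j false u m)))
              + v m * Hface N d hw j m * (indic (onface N j true m)
                  * (gamma j true m * (b m * Dn N d D hatD K J gamma j true u m)))); [|ring].
  rewrite !face_term by assumption. unfold face_flux. ring.
Qed.

Lemma discrete_green u v :
  rsum M (fun m => v m * Hdiag N d hw m * schemeRHS N d D Dxx K J b u m)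
  = - rsum d (fun i => rsum M (fun m =>
        Hdiag N d hw m * J m * b m * (Defs.Dx N d D K i u m * Defs.Dx N d D K i v m)))
    - rsum d (fun k => rsum M (fun m => v m * mv M (Rii N d hw Rxx k (eta d K J b k)) u m))
    + ipGp N d hw gamma v (fun i side m => b m * Dn N d D hatD K J gamma i side u m).
Proof.
  rewrite <- volume_terms, <- remainder_terms, <- boundary_terms. unfold schemeRHS.
  rewrite (rsum_triple_swap (fun m => v m * Hdiag N d hw m)
             (fun i j k m => DDapp N d D Dxx j k (fun p => alpha K J i j i k p * b p) u m)).
  rewrite <- rsum_opp, <- rsum_minus, <- rsum_plus. apply rsum_ext. intros i Hi.
  rewrite <- rsum_opp, <- rsum_minus, <- rsum_plus. apply rsum_ext. intros j Hj.
  rewrite <- rsum_opp, <- rsum_minus, <- rsum_plus. apply rsum_ext. intros k Hk.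
  rewrite sbp_DD by assumption. reflexivity.
Qed.

(** ** The energy *)

Hypothesis HJ : forall m, (m < M)%nat -> 0 < J m.
Hypothesis Ha : forall m, (m < M)%nat -> 0 < a m.
Hypothesis Hb : forall m, (m < M)%nat -> 0 < b m.
Hypothesis HRsym : forall c : vec, (forall r, (r < N)%nat -> 0 <= c r) ->
  forall p q, (p < N)%nat -> (q < N)%nat -> Rxx c p q = Rxx c q p.
Hypothesis HRpsd : forall c : vec, (forall r, (r < N)%nat -> 0 <= c r) ->
  forall v : vec, 0 <= rsum N (fun p => rsum N (fun q => v p * Rxx c p q * v q)).

(** The energy as an explicit quadratic form (the square roots of [a], [b] cancel). *)
Definition energy_quad (u ud : vec) : R :=
  / 2 * rsum M (fun m => Hdiag N d hw m * J m * a m * (ud m * ud m))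
  + / 2 * rsum d (fun i => rsum M (fun m =>
        Hdiag N d hw m * J m * b m * (Defs.Dx N d D K i u m * Defs.Dx N d D K i u m)))
  + / 2 * rsum d (fun k => rsum M (fun m => u m * mv M (Rii N d hw Rxx k (eta d K J b k)) u m)).

Lemma energy_quad_eq u ud : energy N d hw D Rxx K J a b u ud = energy_quad u ud.
Proof.
  unfold energy, energy_quad, ipOp, ipO, dot, npts. f_equal. f_equal.
  - f_equal. apply rsum_ext. intros m Hm. rewrite mv_Hmat by exact Hm.
    pose proof (sqrt_sqrt (a m) ltac:(pose proof (Ha m Hm); lra)) as Hsq.
    transitivity (Hdiag N d hw m * J m * (sqrt (a m) * sqrt (a m)) * (ud m * ud m)); [ring|].
    rewrite Hsq. ring.
  - f_equal. apply rsum_ext. intros i _. apply rsum_ext. intros m Hm. rewrite mv_Hmat by exact Hm.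
    pose proof (sqrt_sqrt (b m) ltac:(pose proof (Hb m Hm); lra)) as Hsq.
    transitivity (Hdiag N d hw m * J m * (sqrt (b m) * sqrt (b m))
                  * (Defs.Dx N d D K i u m * Defs.Dx N d D K i u m)); [ring|].
    rewrite Hsq. ring.
Qed.

(** [eta_k = (sum_i alpha_ikik) b = (sum_i K_ik^2) J b >= 0]. *)
Lemma eta_nonneg k m : (m < M)%nat -> 0 <= eta d K J b k m.
Proof.
  intros Hm. unfold eta. apply Rmult_le_pos.
  - apply rsum_nonneg. intros. unfold alpha. pose proof (HJ m Hm). nra.
  - pose proof (Hb m Hm). lra.
Qed.

Lemma lineof_eta_nonneg k m : (k < d)%nat -> (m < M)%nat ->
  forall r, (r < N)%nat -> 0 <= lineof N k (eta d K J b k) m r.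
Proof. intros. apply eta_nonneg, setcoord_lt; auto. Qed.

Lemma Rii_eta_sym k m m' : (k < d)%nat -> (m < M)%nat -> (m' < M)%nat ->
  Rii N d hw Rxx k (eta d K J b k) m m' = Rii N d hw Rxx k (eta d K J b k) m' m.
Proof.
  intros Hk Hm Hm'. rewrite !Rii_entry, (samel_sym k m' m) by exact Hk.
  destruct (samel_cases k m m') as [[H1 H2]|[H1 _]]; rewrite H1; [|ring].
  rewrite (Hface_coords k m' m) by (intros; symmetry; auto).
  rewrite (lineof_eq k _ m' m) by (auto; rewrite samel_sym; exact H1).
  rewrite HRsym by (auto using lineof_eta_nonneg). reflexivity.
Qed.

Lemma Rii_eta_form_sym k (x y : vec) : (k < d)%nat ->
  rsum M (fun m => x m * mv M (Rii N d hw Rxx k (eta d K J b k)) y m)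
  = rsum M (fun m => y m * mv M (Rii N d hw Rxx k (eta d K J b k)) x m).
Proof.
  intros Hk. unfold mv.
  transitivity (rsum M (fun m => rsum M (fun m' => x m * Rii N d hw Rxx k (eta d K J b k) m m' * y m'))).
  { apply rsum_ext. intros. rewrite <- rsum_scal_l. apply rsum_ext. intros. ring. }
  rewrite rsum_swap. apply rsum_ext. intros m Hm. rewrite <- rsum_scal_l. apply rsum_ext. intros m' Hm'.
  rewrite Rii_eta_sym by assumption. ring.
Qed.

Lemma Rii_eta_line_form k u m : (k < d)%nat -> (m < M)%nat ->
  rsum N (fun r => u (setcoord N k m r) * mv M (Rii N d hw Rxx k (eta d K J b k)) u (setcoord N k m r))
  = Hface N d hw k m * rsum N (fun p => rsum N (fun q =>
      u (setcoord N k m p) * Rxx (lineof N k (eta d K J b k) m) p q * u (setcoord N k m q))).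
Proof.
  intros Hk Hm. rewrite <- rsum_scal_l. apply rsum_ext. intros r Hr.
  assert (Hsc : (setcoord N k m r < M)%nat) by (apply setcoord_lt; auto).
  unfold mv. rewrite (rsum_ext M _ (fun m' => samel N d k m' m
      * (Hface N d hw k m * Rxx (lineof N k (eta d K J b k) m) r (coord N k m') * u m'))).
  - rewrite line_sum, <- !rsum_scal_l by assumption. apply rsum_ext. intros q Hq.
    rewrite coord_setcoord_same by auto. ring.
  - intros m' Hm'.
    rewrite Rii_entry, Hface_setcoord, samel_setcoord, coord_setcoord_same, (samel_sym k m m') by auto.
    rewrite (lineof_eq k _ (setcoord N k m r) m); auto.
    + ring.
    + rewrite samel_setcoord by exact Hr. apply samel_one. auto.
Qed.

Lemma Rii_eta_form_nonneg k u : (k < d)%nat ->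
  0 <= rsum M (fun m => u m * mv M (Rii N d hw Rxx k (eta d K J b k)) u m).
Proof.
  intros Hk. rewrite (sum_by_lines k) by exact Hk. apply rsum_nonneg. intros m Hm.
  apply Rmult_le_pos; [unfold indic; destruct (Nat.eqb _ _); lra|].
  rewrite Rii_eta_line_form by assumption.
  apply Rmult_le_pos; [left; apply Hface_pos|].
  apply (HRpsd _ (lineof_eta_nonneg k m Hk Hm) (fun r => u (setcoord N k m r))).
Qed.

Lemma energy_nonneg u ud : 0 <= energy N d hw D Rxx K J a b u ud.
Proof.
  rewrite energy_quad_eq. unfold energy_quad.
  assert (Hkin : 0 <= rsum M (fun m => Hdiag N d hw m * J m * a m * (ud m * ud m))).
  { apply rsum_nonneg. intros m Hm.
    pose proof (Hdiag_pos m). pose proof (HJ m Hm). pose proof (Ha m Hm).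
    apply Rmult_le_pos; [left; repeat apply Rmult_lt_0_compat; auto|nra]. }
  assert (Hgrad : 0 <= rsum d (fun i => rsum M (fun m =>
      Hdiag N d hw m * J m * b m * (Defs.Dx N d D K i u m * Defs.Dx N d D K i u m)))).
  { apply rsum_nonneg. intros. apply rsum_nonneg. intros m Hm.
    pose proof (Hdiag_pos m). pose proof (HJ m Hm). pose proof (Hb m Hm).
    apply Rmult_le_pos; [left; repeat apply Rmult_lt_0_compat; auto|nra]. }
  assert (Hrem : 0 <= rsum d (fun k => rsum M (fun m => u m * mv M (Rii N d hw Rxx k (eta d K J b k)) u m))).
  { apply rsum_nonneg. intros. apply Rii_eta_form_nonneg. assumption. }
  lra.
Qed.

(** ** Time derivative of the energy *)

Lemma derivable_pt_lim_Dx (u du : R -> vec) i m t :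
  (forall m, (m < M)%nat -> derivable_pt_lim (fun t => u t m) t (du t m)) ->
  derivable_pt_lim (fun x => Defs.Dx N d D K i (u x) m) t (Defs.Dx N d D K i (du t) m).
Proof.
  intros H. unfold Defs.Dx, mv, npts.
  apply (derivable_pt_lim_rsum d (fun j x => K i j m * rsum M (fun m' => Dk N d D j m m' * u x m'))).
  intros j _. apply (derivable_pt_lim_scal (fun x => rsum M (fun m' => Dk N d D j m m' * u x m'))).
  apply derivable_pt_lim_lincomb. exact H.
Qed.

(** Product rule for the energy; the symmetry of [R_kk(eta_k)] merges the two
    halves of each quadratic term. *)
Lemma energy_quad_derivative (u du ddu : R -> vec) t :
  (forall m, (m < M)%nat -> derivable_pt_lim (fun t => u t m) t (du t m)) ->
  (forall m, (m < M)%nat -> derivable_pt_lim (fun t => du t m) t (ddu t m)) ->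
  derivable_pt_lim (fun x => energy_quad (u x) (du x)) t
    (rsum M (fun m => du t m * Hdiag N d hw m * (J m * a m * ddu t m))
     + rsum d (fun i => rsum M (fun m => Hdiag N d hw m * J m * b m
                          * (Defs.Dx N d D K i (u t) m * Defs.Dx N d D K i (du t) m)))
     + rsum d (fun k => rsum M (fun m => du t m * mv M (Rii N d hw Rxx k (eta d K J b k)) (u t) m))).
Proof.
  intros Hu Hdu. unfold energy_quad. eapply derivable_pt_lim_eq.
  - apply derivable_pt_lim_plus; [apply derivable_pt_lim_plus|]; apply derivable_pt_lim_scal;
      apply derivable_pt_lim_rsum; intros.
    + apply derivable_pt_lim_scal, derivable_pt_lim_mult; auto.
    + apply derivable_pt_lim_rsum. intros.
      apply derivable_pt_lim_scal, derivable_pt_lim_mult; apply derivable_pt_lim_Dx; auto.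
    + apply derivable_pt_lim_rsum. intros. unfold mv.
      apply derivable_pt_lim_mult; [auto|apply derivable_pt_lim_lincomb; auto].
  - cbv beta.
    assert (Hkin : rsum M (fun m => Hdiag N d hw m * J m * a m * (ddu t m * du t m + du t m * ddu t m))
      = 2 * rsum M (fun m => du t m * Hdiag N d hw m * (J m * a m * ddu t m))).
    { rewrite <- rsum_scal_l. apply rsum_ext. intros. ring. }
    assert (Hgrad : forall i, rsum M (fun m => Hdiag N d hw m * J m * b m *
        (Defs.Dx N d D K i (du t) m * Defs.Dx N d D K i (u t) m
         + Defs.Dx N d D K i (u t) m * Defs.Dx N d D K i (du t) m))
      = 2 * rsum M (fun m => Hdiag N d hw m * J m * b m
                      * (Defs.Dx N d D K i (u t) m * Defs.Dx N d D K i (du t) m))).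
    { intros i. rewrite <- rsum_scal_l. apply rsum_ext. intros. ring. }
    assert (Hrem : forall k, (k < d)%nat ->
      rsum M (fun m => du t m * mv M (Rii N d hw Rxx k (eta d K J b k)) (u t) m
                       + u t m * mv M (Rii N d hw Rxx k (eta d K J b k)) (du t) m)
      = 2 * rsum M (fun m => du t m * mv M (Rii N d hw Rxx k (eta d K J b k)) (u t) m)).
    { intros k Hk. rewrite rsum_plus, (Rii_eta_form_sym k (u t) (du t)) by exact Hk. ring. }
    unfold mv in Hrem |- *.
    rewrite Hkin, (rsum_ext d _ _ (fun i _ => Hgrad i)), (rsum_ext d _ _ Hrem), !rsum_scal_l.
    field.
Qed.

Lemma energy_rate (u du ddu SAT : R -> vec) t :
  (forall m, (m < M)%nat -> derivable_pt_lim (fun t => u t m) t (du t m)) ->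
  (forall m, (m < M)%nat -> derivable_pt_lim (fun t => du t m) t (ddu t m)) ->
  (forall m, (m < M)%nat -> J m * a m * ddu t m = schemeRHS N d D Dxx K J b (u t) m + SAT t m) ->
  derivable_pt_lim (fun t => energy N d hw D Rxx K J a b (u t) (du t)) t
    (ipGp N d hw gamma (du t) (fun i side m => b m * Dn N d D hatD K J gamma i side (u t) m)
     + dot M (du t) (mv M (Hmat N d hw) (SAT t))).
Proof.
  intros Hu Hdu Hscheme.
  replace (fun t => energy N d hw D Rxx K J a b (u t) (du t)) with (fun t => energy_quad (u t) (du t))
    by (apply functional_extensionality; intros; symmetry; apply energy_quad_eq).
  eapply derivable_pt_lim_eq; [apply (energy_quad_derivative u du ddu t Hu Hdu)|].
  assert (Hkin : rsum M (fun m => du t m * Hdiag N d hw m * (J m * a m * ddu t m))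
    = rsum M (fun m => du t m * Hdiag N d hw m * schemeRHS N d D Dxx K J b (u t) m)
      + dot M (du t) (mv M (Hmat N d hw) (SAT t))).
  { unfold dot. rewrite <- rsum_plus. apply rsum_ext. intros m Hm.
    rewrite Hscheme, mv_Hmat by exact Hm. ring. }
  rewrite Hkin, discrete_green. ring.
Qed.

Lemma Hdiag_SATneu u m : (m < M)%nat ->
  Hdiag N d hw m * SATneu N d hw D hatD K J b gamma u m
  = - rsum d (fun i =>
        indic (onface N i false m) * Hface N d hw i m
          * (gamma i false m * (b m * Dn N d D hatD K J gamma i false u m))
      + indic (onface N i true m) * Hface N d hw i m
          * (gamma i true m * (b m * Dn N d D hatD K J gamma i true u m))).
Proof.
  intros Hm. unfold SATneu. pose proof (Hdiag_pos m).
  rewrite <- Rmult_assoc, <- Ropp_mult_distr_r, Rinv_r, <- Ropp_mult_distr_l, Rmult_1_l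
    by lra.
  f_equal. apply rsum_ext. intros. ring.
Qed.

Lemma neumann_sat_cancels u ud :
  ipGp N d hw gamma ud (fun i side m => b m * Dn N d D hatD K J gamma i side u m)
  + dot M ud (mv M (Hmat N d hw) (SATneu N d hw D hatD K J b gamma u)) = 0.
Proof.
  unfold ipGp, ipG, dot, npts.
  rewrite (rsum_ext M _ (fun m => ud m * (Hdiag N d hw m * SATneu N d hw D hatD K J b gamma u m)))
    by (intros; rewrite mv_Hmat by assumption; reflexivity).
  rewrite (rsum_ext M _ _ (fun m Hm => f_equal (Rmult (ud m)) (Hdiag_SATneu u m Hm))).
  rewrite (rsum_ext M _ (fun m => - rsum d (fun i =>
        indic (onface N i false m) * ud m * Hface N d hw i m
          * (gamma i false m * (b m * Dn N d D hatD K J gamma i false u m))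
      + indic (onface N i true m) * ud m * Hface N d hw i m
          * (gamma i true m * (b m * Dn N d D hatD K J gamma i true u m)))))
    by (intros; rewrite <- !rsum_opp, <- rsum_scal_l; apply rsum_ext; intros; ring).
  rewrite rsum_opp, rsum_swap, (rsum_ext d _ _ (fun i _ => rsum_plus M _ _)). ring.
Qed.

End SBPScheme.

Lemma hweight_pos N s h w : (2 <= N)%nat -> h = / INR (N - 1) ->
  (forall k, (k < s)%nat -> 0 < w k) -> (2 * s <= N)%nat ->
  forall k, (k < N)%nat -> 0 < hweight N s h w k.
Proof.
  intros HN Hh Hw Hs k Hk. unfold hweight.
  assert (0 < h) by (rewrite Hh; apply Rinv_0_lt_compat, lt_0_INR; lia).
  apply Rmult_lt_0_compat; [assumption|].
  destruct (Nat.ltb_spec k s); [apply Hw; assumption|].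
  destruct (Nat.leb_spec (N - s) k); [apply Hw; lia|lra].
Qed.
Theorem mainTheorem1
  (d N s : nat) (h : R) (w : nat -> R) (D hatD : mat) (Dxx Rxx : vec -> mat)
  (K : nat -> nat -> vec) (J a b : vec) (gamma : nat -> bool -> vec)
  (Hd : (1 <= d)%nat) (HN : (2 <= N)%nat) (Hh : h = / INR (N - 1))
  (Hs : (2 * s <= N)%nat) (Hw : forall k, (k < s)%nat -> 0 < w k)
  (* SBP property of D_xi *)
  (HSBP : forall p q, (p < N)%nat -> (q < N)%nat ->
     hweight N s h w p * D p q + D q p * hweight N s h w q
     = - indic (Nat.eqb p 0 && Nat.eqb q 0)
       + indic (Nat.eqb p (N - 1) && Nat.eqb q (N - 1)))
  (* defining identity of D_xixi(c) *)
  (HDxx : forall (c : vec) p q, (p < N)%nat -> (q < N)%nat ->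
     hweight N s h w p * Dxx c p q
     = - rsum N (fun r => D r p * hweight N s h w r * c r * D r q)
       - Rxx c p q
       - indic (Nat.eqb p 0) * c 0%nat * hatD 0%nat q
       + indic (Nat.eqb p (N - 1)) * c (N - 1)%nat * hatD (N - 1)%nat q)
  (* R_xixi(c) is linear in c *)
  (HRlin : forall (c1 c2 : vec) (x y : R) p q, (p < N)%nat -> (q < N)%nat ->
     Rxx (fun r => x * c1 r + y * c2 r) p q = x * Rxx c1 p q + y * Rxx c2 p q)
  (* ... and symmetric positive semidefinite when c >= 0 *)
  (HRsym : forall c : vec, (forall r, (r < N)%nat -> 0 <= c r) ->
     forall p q, (p < N)%nat -> (q < N)%nat -> Rxx c p q = Rxx c q p)
  (HRpsd : forall c : vec, (forall r, (r < N)%nat -> 0 <= c r) ->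
     forall v : vec, 0 <= rsum N (fun p => rsum N (fun q => v p * Rxx c p q * v q)))
  (* coefficients *)
  (HJ : forall m, (m < npts N d)%nat -> 0 < J m)
  (Ha : forall m, (m < npts N d)%nat -> 0 < a m)
  (Hb : forall m, (m < npts N d)%nat -> 0 < b m)
  (Hg : forall i side m, (i < d)%nat -> (m < npts N d)%nat ->
     onface N i side m = true -> 0 < gamma i side m) :
  let hw := hweight N s h w in
  let E := energy N d hw D Rxx K J a b in
  (* general identity for an arbitrary SAT *)
  (forall u du ddu SAT : R -> vec,
     (forall m t, (m < npts N d)%nat -> derivable_pt_lim (fun t => u t m) t (du t m)) ->
     (forall m t, (m < npts N d)%nat -> derivable_pt_lim (fun t => du t m) t (ddu t m)) ->
     (forall m, (m < npts N d)%nat -> continuity (fun t => ddu t m)) ->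
     (forall t m, (m < npts N d)%nat ->
        J m * a m * ddu t m = schemeRHS N d D Dxx K J b (u t) m + SAT t m) ->
     forall t, derivable_pt_lim (fun t => E (u t) (du t)) t
       (ipGp N d hw gamma (du t)
           (fun i side m => b m * Dn N d D hatD K J gamma i side (u t) m)
        + dot (npts N d) (du t) (mv (npts N d) (Hmat N d hw) (SAT t))))
  /\
  (* Neumann penalty: energy conservation *)
  (forall u du ddu : R -> vec,
     (forall m t, (m < npts N d)%nat -> derivable_pt_lim (fun t => u t m) t (du t m)) ->
     (forall m t, (m < npts N d)%nat -> derivable_pt_lim (fun t => du t m) t (ddu t m)) ->
     (forall m, (m < npts N d)%nat -> continuity (fun t => ddu t m)) ->
     (forall t m, (m < npts N d)%nat ->
        J m * a m * ddu t m = schemeRHS N d D Dxx K J b (u t) m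
                              + SATneu N d hw D hatD K J b gamma (u t) m) ->
     forall t, derivable_pt_lim (fun t => E (u t) (du t)) t 0)
  /\
  (* nonnegativity of the energy *)
  (forall u ud : vec, 0 <= E u ud).
Proof.
  intros hw E.
  pose proof (hweight_pos N s h w HN Hh Hw Hs) as Hhw.
  unfold npts in *. split; [|split].
  - intros u du ddu SAT Hu Hdu _ Hscheme t.
    eapply energy_rate; eauto.
  - intros u du ddu Hu Hdu _ Hscheme t.
    eapply derivable_pt_lim_eq.
    + eapply energy_rate with (SAT := fun t => SATneu N d hw D hatD K J b gamma (u t)); eauto.
    + eapply neumann_sat_cancels; eauto.
  - intros u ud. eapply energy_nonneg; eauto.
Qed.
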